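(* Let $C,D$ be sets and let $m$ be a $(C\mathcal y,D\mathcal y)$-bicomodule. Then (1) $m$ is a left adjoint in $\mathbb C\mathbf{at}^\sharp$ if and only if $m$ is linear, i.e. $m\cong M\mathcal y$ for a set $M$; (2) $m$ is a right adjoint in $\mathbb C\mathbf{at}^\sharp$ if and only if $m$ is conjunctive, i.e. $m_a(1)\cong1$ for each $a\in C$. Moreover, the right adjoint of a linear bicomodule corresponding to the span $D\xleftarrow{f}M\xrightarrow{h}C$ is the conjunctive $(D\mathcal y,C\mathcal y)$-bicomodule $\sum_{b\in D}\mathcal y^{f^{-1}(b)}$ (corresponding to $\Pi_f\Delta_h$), and the left adjoint of a conjunctive bicomodule $\sum_{a\in C}\mathcal y^{m[a]}$ (each $m[a]$ a set over $D$) is the linear $(D\mathcal y,C\mathcal y)$-bicomodule $\sum_{b\in D}\sum_{a\in C}\sum_{x\in m[a]_b}\mathcal y$.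
   Context: $\mathbb C\mathbf{at}^\sharp$: the bicategory whose objects are comonoids in $(\mathbf{Poly},\mathcal y,\triangleleft)$ (small categories), 1-cells $(c,d)$-bicomodules (polynomials $m$ with compatible coassociative counital coactions $m\to c\triangleleft m$, $m\to m\triangleleft d$), 2-cells bicomodule maps, composition $\triangleleft_d$ (equalizer of $m\triangleleft n\rightrightarrows m\triangleleft d\triangleleft n$), and identity on $c$ the bicomodule $c$. Adjunctions are internal to this bicategory. $C\mathcal y$ is the discrete category on the set $C$. For a $(c,d)$-bicomodule $m$ and $a\in c(1)$, $m_a$ is the summand of $m$ over $a$ under $m\to c\triangleleft m\to c(1)$. A $(C\mathcal y,D\mathcal y)$-bicomodule with linear carrier $M\mathcal y$ is the same as a span $C\leftarrow M\to D$; for a conjunctive one, $m[a]$ is a set equipped with a map to $D$, and $m[a]_b$ its fiber over $b$. *)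

(* A (C y, D y)-bicomodule is a polynomial m = Sum_{i in m(1)} y^{m[i]}
   together with coactions m -> Cy <| m and m -> m <| Dy.  By counitality,
   such coactions amount exactly to a labelling of positions by C (left
   coaction) and of directions by D (right coaction); coassociativity is then
   automatic. *)



Record bicomod (C D : Type) := Bicomod {
  pos  : Type;
  dir  : pos -> Type;
  lab  : pos -> C;
  dlab : forall i, dir i -> D
}.
Arguments pos {C D} b : rename.
Arguments dir {C D} b _ : rename.
Arguments lab {C D} b _ : rename.
Arguments dlab {C D} b {i} _ : rename.

Record hom {C D} (m n : bicomod C D) := Hom {
  hpos  : pos m -> pos n;
  hdir  : forall i, dir n (hpos i) -> dir m i;
  hlab  : forall i, lab n (hpos i) = lab m i;
  hdlab : forall i e, dlab m (hdir i e) = dlab n e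
}.
Arguments hpos {C D m n} _ _.
Arguments hdir {C D m n} _ {i} _.
Arguments hlab {C D m n} _ _.
Arguments hdlab {C D m n} _ _ _.

Definition hom_eq {C D} {m n : bicomod C D} (phi psi : hom m n) : Prop :=
  exists e : forall i, hpos phi i = hpos psi i,
    forall i (d : dir n (hpos phi i)),
      hdir phi d = hdir psi (eq_rect _ (dir n) d _ (e i)).

Definition idh {C D} (m : bicomod C D) : hom m m :=
  @Hom _ _ m m (fun i => i) (fun i e => e) (fun i => eq_refl) (fun i e => eq_refl).

Definition vcomp {C D} {m n p : bicomod C D} (phi : hom m n) (psi : hom n p)
  : hom m p :=
  @Hom _ _ m p (fun i => hpos psi (hpos phi i))
    (fun i e => hdir phi (hdir psi e))
    (fun i => eq_trans (hlab psi (hpos phi i)) (hlab phi i))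
    (fun i e => eq_trans (hdlab phi i (hdir psi e)) (hdlab psi (hpos phi i) e)).

Definition idb (C : Type) : bicomod C C :=
  @Bicomod C C C (fun _ => unit) (fun c => c) (fun c _ => c).

(* composition  m <|_{Dy} n  (equalizer of m<|n => m<|Dy<|n) *)
Definition comp {C D E} (m : bicomod C D) (n : bicomod D E) : bicomod C E :=
  @Bicomod C E
    {i : pos m & {g : forall a : dir m i, pos n | forall a, lab n (g a) = dlab m a}}
    (fun ig => {a : dir m (projT1 ig) & dir n (proj1_sig (projT2 ig) a)})
    (fun ig => lab m (projT1 ig))
    (fun ig ab => dlab n (projT2 ab)).

Definition mkcpos {C D E} (m : bicomod C D) (n : bicomod D E) (i : pos m)
  (g : forall a : dir m i, pos n) (H : forall a, lab n (g a) = dlab m a)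
  : pos (comp m n) :=
  existT (fun i => {g : forall a : dir m i, pos n | forall a, lab n (g a) = dlab m a})
    i (exist (fun g : forall a : dir m i, pos n => forall a, lab n (g a) = dlab m a) g H).

Definition whiskR {C D E} {m m' : bicomod C D} (phi : hom m m') (n : bicomod D E)
  : hom (comp m n) (comp m' n).
Proof.
  refine (@Hom _ _ (comp m n) (comp m' n)
    (fun ig => mkcpos m' n (hpos phi (projT1 ig))
       (fun a' => proj1_sig (projT2 ig) (hdir phi a'))
       (fun a' => eq_trans (proj2_sig (projT2 ig) _) (hdlab phi _ a')))
    (fun ig ab => existT _ (hdir phi (projT1 ab)) (projT2 ab))
    (fun ig => hlab phi (projT1 ig))
    (fun ig ab => eq_refl)).
Defined.

Definition whiskL {C D E} (m : bicomod C D) {n n' : bicomod D E} (psi : hom n n')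
  : hom (comp m n) (comp m n').
Proof.
  refine (@Hom _ _ (comp m n) (comp m n')
    (fun ig => mkcpos m n' (projT1 ig)
       (fun a => hpos psi (proj1_sig (projT2 ig) a))
       (fun a => eq_trans (hlab psi _) (proj2_sig (projT2 ig) a)))
    (fun ig ab => existT _ (projT1 ab) (hdir psi (projT2 ab)))
    (fun ig => eq_refl)
    (fun ig ab => hdlab psi _ (projT2 ab))).
Defined.

Definition assoc {C D E F} (m : bicomod C D) (n : bicomod D E) (p : bicomod E F)
  : hom (comp (comp m n) p) (comp m (comp n p)).
Proof.
  refine (@Hom _ _ (comp (comp m n) p) (comp m (comp n p))
    (fun x => mkcpos m (comp n p) (projT1 (projT1 x))
       (fun a => mkcpos n p (proj1_sig (projT2 (projT1 x)) a)
                 (fun b => proj1_sig (projT2 x) (existT _ a b))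
                 (fun b => proj2_sig (projT2 x) (existT _ a b)))
       (fun a => proj2_sig (projT2 (projT1 x)) a))
    (fun x abc => existT _ (existT _ (projT1 abc) (projT1 (projT2 abc)))
                           (projT2 (projT2 abc)))
    (fun x => eq_refl)
    (fun x abc => eq_refl)).
Defined.

Definition assoc_inv {C D E F} (m : bicomod C D) (n : bicomod D E) (p : bicomod E F)
  : hom (comp m (comp n p)) (comp (comp m n) p).
Proof.
  refine (@Hom _ _ (comp m (comp n p)) (comp (comp m n) p)
    (fun x => mkcpos (comp m n) p
       (mkcpos m n (projT1 x)
          (fun a => projT1 (proj1_sig (projT2 x) a))
          (fun a => proj2_sig (projT2 x) a))
       (fun ab => proj1_sig (projT2 (proj1_sig (projT2 x) (projT1 ab)))
                                     (projT2 ab))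
       (fun ab => proj2_sig (projT2 (proj1_sig (projT2 x) (projT1 ab)))
                                     (projT2 ab)))
    (fun x abc => existT _ (projT1 (projT1 abc))
                    (existT _ (projT2 (projT1 abc)) (projT2 abc)))
    (fun x => eq_refl)
    (fun x abc => eq_refl)).
Defined.

Definition runit {C D} (m : bicomod C D) : hom (comp m (idb D)) m.
Proof.
  refine (@Hom _ _ (comp m (idb D)) m
    (fun ig => projT1 ig)
    (fun ig e => existT _ e tt)
    (fun ig => eq_refl)
    (fun ig e => proj2_sig (projT2 ig) e)).
Defined.

Definition runit_inv {C D} (m : bicomod C D) : hom m (comp m (idb D)).
Proof.
  refine (@Hom _ _ m (comp m (idb D))
    (fun i => mkcpos m (idb D) i (fun a => dlab m a) (fun a => eq_refl))
    (fun i ae => projT1 ae)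
    (fun i => eq_refl)
    (fun i ae => eq_refl)).
Defined.

Definition lunit {C D} (m : bicomod C D) : hom (comp (idb C) m) m.
Proof.
  refine (@Hom _ _ (comp (idb C) m) m
    (fun cg => proj1_sig (projT2 cg) tt)
    (fun cg e => existT _ tt e)
    (fun cg => proj2_sig (projT2 cg) tt)
    (fun cg e => eq_refl)).
Defined.

Definition lunit_inv {C D} (m : bicomod C D) : hom m (comp (idb C) m).
Proof.
  refine (@Hom _ _ m (comp (idb C) m)
    (fun i => mkcpos (idb C) m (lab m i) (fun _ => i) (fun _ => eq_refl))
    (fun i ue => projT2 ue)
    (fun i => eq_refl)
    (fun i ue => eq_refl)).
Defined.

(* Following the convention that a
   (c,d)-bicomodule is a 1-cell from d to c and that m <| n is the composite
   "m after n", L : (Cy,Dy)-bicomodule is a 1-cell Dy -> Cy, R is a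
   (Dy,Cy)-bicomodule, the unit is  eta : Dy => R <|_{Cy} L  and the counit is
   eps : L <|_{Dy} R => Cy, subject to the two triangle identities
   (written with the associator and unitors). *)
Definition adjunction {C D} (L : bicomod C D) (R : bicomod D C) : Prop :=
  exists (eta : hom (idb D) (comp R L)) (eps : hom (comp L R) (idb C)),
    hom_eq (vcomp (runit_inv L)
             (vcomp (whiskL L eta)
               (vcomp (assoc_inv L R L)
                 (vcomp (whiskR eps L) (lunit L)))))
           (idh L)
    /\
    hom_eq (vcomp (lunit_inv R)
             (vcomp (whiskR eta R)
               (vcomp (assoc R L R)
                 (vcomp (whiskL R eps) (runit R)))))
           (idh R).

Definition is_left_adjoint {C D} (L : bicomod C D) : Prop :=
  exists R : bicomod D C, adjunction L R.

Definition is_right_adjoint {C D} (R : bicomod D C) : Prop :=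
  exists L : bicomod C D, adjunction L R.

Definition set_iso (X Y : Type) : Prop :=
  exists (f : X -> Y) (g : Y -> X), (forall x, g (f x) = x) /\ (forall y, f (g y) = y).

Definition poly_iso {P Q : Type} (A : P -> Type) (B : Q -> Type) : Prop :=
  exists (f : P -> Q) (g : Q -> P),
    (forall x, g (f x) = x) /\ (forall y, f (g y) = y) /\
    (forall i, set_iso (B (f i)) (A i)).

Definition linear {C D} (m : bicomod C D) : Prop :=
  exists M : Type, poly_iso (dir m) (fun _ : M => unit).

Definition conjunctive {C D} (m : bicomod C D) : Prop :=
  forall a : C, set_iso {i : pos m | lab m i = a} unit.

Definition lin_span {C D M : Type} (h : M -> C) (f : M -> D) : bicomod C D :=
  @Bicomod C D M (fun _ => unit) h (fun x _ => f x).

Definition lin_radj {C D M : Type} (f : M -> D) (h : M -> C) : bicomod D C :=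
  @Bicomod D C D (fun b => {x : M | f x = b}) (fun b => b)
    (fun b x => h (proj1_sig x)).

Definition conj_fam {C D : Type} (X : C -> Type) (k : forall a, X a -> D)
  : bicomod C D :=
  @Bicomod C D C X (fun a => a) k.

Definition conj_ladj {C D : Type} (X : C -> Type) (k : forall a, X a -> D)
  : bicomod D C :=
  @Bicomod D C {b : D & {a : C & {x : X a | k a x = b}}} (fun _ => unit)
    (fun z => projT1 z) (fun z _ => projT1 (projT2 z)).

(* Between discrete comonoids a bicomodule is just a family of sets of
   directions over labelled positions.  If L -| R, the first triangle identity
   routes every direction of L through the counit, whose directions come from
   the unique direction of the identity C y; so each direction set of L is a
   singleton and L is linear.  The second triangle identity says that the unit
   picks, for every b in D, a position of R labelled b which must be the only
   one; so R is conjunctive.  Conversely, the right adjoint of a linear L is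
   the conjunctive Pi_f Delta_h and the left adjoint of a conjunctive R is the
   linear bicomodule of its labelled directions; the unit and counit are the
   evident maps, and the triangle identities hold up to proof irrelevance of
   the labelling equations. *)

From Stdlib Require Import ProofIrrelevance IndefiniteDescription.

Definition is_singleton (X : Type) : Prop := exists x : X, forall y, y = x.

Lemma set_iso_sym (X Y : Type) : set_iso X Y -> set_iso Y X.
Proof. intros [f [g [gf fg]]]. exists g, f. split; assumption. Qed.

Lemma set_iso_unit (X : Type) : set_iso X unit <-> is_singleton X.
Proof.
  split.
  - intros [f [g [gf _]]]. exists (g tt). intro y.
    rewrite <- (gf y). destruct (f y). reflexivity.
  - intros [x0 Hx0]. exists (fun _ => tt), (fun _ => x0). split.
    + intro y. symmetry. apply Hx0.
    + intros []. reflexivity.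
Qed.

Lemma singleton_choice {A : Type} (B : A -> Type) :
  (forall a, is_singleton (B a)) -> exists u : forall a, B a, forall a b, b = u a.
Proof.
  intro H.
  exists (fun a => proj1_sig (constructive_indefinite_description _ (H a))).
  intros a b. exact (proj2_sig (constructive_indefinite_description _ (H a)) b).
Qed.

Lemma linearE {C D} (m : bicomod C D) :
  linear m <-> forall i, is_singleton (dir m i).
Proof.
  split.
  - intros [M [f [g [_ [_ Hdir]]]]] i.
    apply set_iso_unit, set_iso_sym, Hdir.
  - intro H. exists (pos m), (fun i => i), (fun i => i).
    split; [reflexivity | split; [reflexivity |]].
    intro i. apply set_iso_sym, set_iso_unit, H.
Qed.

Section RightAdjointOfLinear.
Variables (C D : Type) (L : bicomod C D) (u : forall i, dir L i).
Hypothesis u_unique : forall i (x : dir L i), x = u i.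

Let R : bicomod D C := lin_radj (fun i => dlab L (u i)) (lab L).

Definition lin_unit : hom (idb D) (comp R L).
Proof.
  refine (@Hom _ _ (idb D) (comp R L)
    (fun b => mkcpos R L b (fun x => proj1_sig x) (fun x => eq_refl))
    (fun b _ => tt) (fun b => eq_refl) _).
  intros b [x y]; cbn in *.
  rewrite (u_unique _ y). symmetry. exact (proj2_sig x).
Defined.

Definition lin_counit : hom (comp L R) (idb C) :=
  @Hom _ _ (comp L R) (idb C)
    (fun ig => lab L (projT1 ig))
    (fun ig _ => existT _ (u (projT1 ig))
        (exist _ (projT1 ig) (eq_sym (proj2_sig (projT2 ig) (u (projT1 ig))))))
    (fun ig => eq_refl) (fun ig _ => eq_refl).

Lemma adjunction_lin_radj : adjunction L R.
Proof.
  exists lin_unit, lin_counit. split.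
  - exists (fun i => eq_refl). intros i d; cbn. symmetry. apply u_unique.
  - exists (fun i => eq_refl). intros b [i p]; cbn.
    f_equal. apply proof_irrelevance.
Qed.

End RightAdjointOfLinear.

Lemma dlab_eq_rect {C D} (m : bicomod C D) (i j : pos m) (e : i = j) (a : dir m i) :
  dlab m (eq_rect i (dir m) a j e) = dlab m a.
Proof. destruct e. reflexivity. Qed.

Section LeftAdjointOfConjunctive.
Variables (C D : Type) (R : bicomod D C) (p : D -> pos R).
Hypotheses (lab_p : forall b, lab R (p b) = b) (p_lab : forall j, p (lab R j) = j).

Let L : bicomod C D := conj_ladj (fun b => dir R (p b)) (fun b x => dlab R x).

Definition conj_unit : hom (idb D) (comp R L) :=
  @Hom _ _ (idb D) (comp R L)
    (fun b => mkcpos R L (p b)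
       (fun x => existT _ (dlab R x) (existT _ b (exist _ x eq_refl)))
       (fun x => eq_refl))
    (fun b _ => tt) lab_p (fun b _ => eq_refl).

Definition p_eq_of_lab (b : D) (j : pos R) (q : lab R j = b) : p b = j :=
  eq_trans (f_equal p (eq_sym q)) (p_lab j).

Definition conj_counit : hom (comp L R) (idb C).
Proof.
  refine (@Hom _ _ (comp L R) (idb C)
    (fun ig => projT1 (projT1 ig))
    (fun ig _ => existT _ tt
       (eq_rect _ (dir R) (proj1_sig (projT2 (projT2 (projT1 ig)))) _
          (p_eq_of_lab _ _ (proj2_sig (projT2 ig) tt))))
    (fun ig => eq_refl) _).
  intros [[a [b [x px]]] [g hg]] []; cbn.
  rewrite dlab_eq_rect. exact px.
Defined.

Lemma adjunction_conj_ladj : adjunction L R.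
Proof.
  exists conj_unit, conj_counit. split.
  - unshelve eexists.
    + intros [a [b [x px]]].
      (* generalising the transport [E] lets proof irrelevance make it [eq_refl] *)
      assert (Hpos : forall E : p b = p b,
        (existT _ (dlab R (eq_rect _ (dir R) x _ E))
          (existT _ b (exist _ (eq_rect _ (dir R) x _ E) eq_refl)) : pos L)
        = existT _ a (existT _ b (exist _ x px))).
      { intro E. rewrite (proof_irrelevance _ E eq_refl). destruct px. reflexivity. }
      exact (Hpos _).
    + intros i d. destruct (hdir _ d), (hdir (idh L) _). reflexivity.
  - exists p_lab. intros j y; cbn.
    f_equal. apply proof_irrelevance.
Qed.

End LeftAdjointOfConjunctive.

Lemma hom_eq_idh_hdir_surj {C D} {m : bicomod C D} (phi : hom m m) :
  hom_eq phi (idh m) -> forall i (y : dir m i), exists d, @hdir _ _ _ _ phi i d = y.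
Proof.
  intros [e He] i y. exists (eq_rect _ (dir m) y _ (eq_sym (e i))).
  rewrite He. apply rew_opp_r.
Qed.

Lemma left_adjoint_dir_singleton {C D} (L : bicomod C D) (R : bicomod D C) :
  adjunction L R -> forall i, is_singleton (dir L i).
Proof.
  intros [eta [eps [triangleL _]]] i.
  eexists. intro y.
  destruct (hom_eq_idh_hdir_surj _ triangleL i y) as [d <-].
  cbn. reflexivity.
Qed.

Lemma right_adjoint_fiber_singleton {C D} (L : bicomod C D) (R : bicomod D C) :
  adjunction L R -> forall b, is_singleton {j : pos R | lab R j = b}.
Proof.
  intros [eta [eps [_ [e _]]]] b.
  exists (exist _ (projT1 (hpos eta b)) (hlab eta b)).
  intros [j q]. subst b. apply eq_sig_hprop.
  - intros; apply proof_irrelevance.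
  - symmetry. exact (e j).
Qed.

Lemma left_adjointP {C D} (m : bicomod C D) : is_left_adjoint m <-> linear m.
Proof.
  rewrite linearE. split.
  - intros [R adj]. exact (left_adjoint_dir_singleton m R adj).
  - intro H. destruct (singleton_choice _ H) as [u u_unique].
    eexists. exact (adjunction_lin_radj _ _ m u u_unique).
Qed.

Lemma right_adjointP {C D} (m : bicomod C D) : is_right_adjoint m <-> conjunctive m.
Proof.
  unfold conjunctive. setoid_rewrite set_iso_unit. split.
  - intros [L adj]. exact (right_adjoint_fiber_singleton L m adj).
  - intro H. destruct (singleton_choice _ H) as [u u_unique].
    eexists. apply (adjunction_conj_ladj _ _ m (fun b => proj1_sig (u b))).
    + intro b. exact (proj2_sig (u b)).
    + intro j. rewrite <- (u_unique _ (exist _ j eq_refl)). reflexivity.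
Qed.

Theorem proposition2p39 :
  (forall (C D : Type) (m : bicomod C D), is_left_adjoint m <-> linear m) /\
  (forall (C D : Type) (m : bicomod C D), is_right_adjoint m <-> conjunctive m) /\
  (forall (C D M : Type) (f : M -> D) (h : M -> C),
      adjunction (lin_span h f) (lin_radj f h) /\ conjunctive (lin_radj f h)) /\
  (forall (C D : Type) (X : C -> Type) (k : forall a, X a -> D),
      adjunction (conj_ladj X k) (conj_fam X k) /\ linear (conj_ladj X k)).
Proof.
  split; [| split; [| split]].
  - exact @left_adjointP.
  - exact @right_adjointP.
  - intros C D M f h.
    assert (adj : adjunction (lin_span h f) (lin_radj f h)).
    { exact (adjunction_lin_radj _ _ (lin_span h f) (fun _ => tt)
               (fun _ x => match x with tt => eq_refl end)). }
    split; [exact adj |].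
    apply right_adjointP. eexists. exact adj.
  - intros C D X k.
    assert (adj : adjunction (conj_ladj X k) (conj_fam X k)).
    { exact (adjunction_conj_ladj _ _ (conj_fam X k) (fun a => a)
               (fun a => eq_refl) (fun a => eq_refl)). }
    split; [exact adj |].
    apply left_adjointP. eexists. exact adj.
Qed.
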